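(* The only pair of integers $(x,y)$ satisfying \[\frac{2x+y}{\sqrt{3y^2-4y+2}}=\frac{-x-2y}{\sqrt{3x^2-4x+2}}\] is $x=y=0$.
   Context: Square roots denote positive square roots (the radicands are positive for all integers $x,y$). *)

From Stdlib Require Import Reals ZArith.

(** Clearing the square roots, a solution satisfies
    [(2x+y)(-x-2y) >= 0] and [(2x+y)^2 (3x^2-4x+2) = (x+2y)^2 (3y^2-4y+2)].
    The difference of the two sides of the latter factors as [(x - y) Q(x, y)]
    with [Q = (2x+y)^2 (3s-4) + 3s(3y^2-4y+2)], [s = x + y].  On the diagonal
    the sign condition reads [-9y^2 >= 0].  For [s <= 0], [Q] is a sum of two
    nonpositive terms, so [Q = 0] forces [s = 0 = 2x+y]; for [s >= 2] both
    terms are positive; on the line [s = 1], [Q = 2(2x-1)^2] is nonzero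
    because [2x-1] is odd. *)

From Stdlib Require Import Reals ZArith Lra Lia Psatz.
Open Scope R_scope.

Lemma quadratic_pos (t : R) : 0 < 3 * t ^ 2 - 4 * t + 2.
Proof. pose proof (pow2_ge_0 (3 * t - 2)). nra. Qed.

Lemma div_sqrt_eq_sign_square (a b A B : R) :
  0 < A -> 0 < B -> a / sqrt A = b / sqrt B ->
  0 <= a * b /\ a * a * B = b * b * A.
Proof.
  intros HA HB Heq.
  pose proof (sqrt_lt_R0 _ HA) as sA_pos.
  pose proof (sqrt_lt_R0 _ HB) as sB_pos.
  assert (cross : a * sqrt B = b * sqrt A).
  { field_simplify_eq in Heq; [split; lra | rewrite Heq; ring]. }
  split.
  - assert (a * b * sqrt A = a * a * sqrt B) by (rewrite Rmult_assoc, <- cross; ring).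
    nra.
  - rewrite <- (sqrt_sqrt A), <- (sqrt_sqrt B) by lra.
    replace (a * a * (sqrt B * sqrt B)) with ((a * sqrt B) * (a * sqrt B)) by ring.
    rewrite cross. ring.
Qed.

Open Scope Z_scope.

Lemma difference_factorization (x y : Z) :
  (2*x+y)*(2*x+y)*(3*x*x-4*x+2) - (-x-2*y)*(-x-2*y)*(3*y*y-4*y+2)
  = (x - y) * ((2*x+y)*(2*x+y)*(3*(x+y)-4) + 3*(x+y)*(3*y*y-4*y+2)).
Proof. ring. Qed.

Lemma cofactor_eq0 (x y : Z) :
  (2*x+y)*(2*x+y)*(3*(x+y)-4) + 3*(x+y)*(3*y*y-4*y+2) = 0 ->
  x = 0 /\ y = 0.
Proof.
  intros Hq.
  assert (HA : 0 < 3*y*y-4*y+2) by (pose proof (Z.square_nonneg (3*y-2)); nia).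
  pose proof (Z.square_nonneg (2*x+y)).
  destruct (Z_le_gt_dec (x+y) 0) as [Hs|Hs]; [|destruct (Z.eq_dec (x+y) 1) as [Hs1|Hs1]].
  - assert (Hfirst : (2*x+y)*(2*x+y)*(3*(x+y)-4) <= 0) by nia.
    assert (Hsecond : 3*(x+y)*(3*y*y-4*y+2) <= 0) by nia.
    assert (Hsum0 : x + y = 0) by nia.
    assert (Hdouble0 : (2*x+y)*(2*x+y) = 0) by nia.
    apply Z.mul_eq_0 in Hdouble0. lia.
  - assert (Hline : 2*((2*x-1)*(2*x-1)) = 0).
    { replace y with (1 - x) in Hq by lia. rewrite <- Hq. ring. }
    assert (Hodd : (2*x-1)*(2*x-1) = 0) by lia.
    apply Z.mul_eq_0 in Hodd. lia.
  - assert (0 < (2*x+y)*(2*x+y)*(3*(x+y)-4)) by nia.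
    nia.
Qed.

Lemma integer_solution (x y : Z) :
  0 <= (2*x+y)*(-x-2*y) ->
  (2*x+y)*(2*x+y)*(3*x*x-4*x+2) = (-x-2*y)*(-x-2*y)*(3*y*y-4*y+2) ->
  x = 0 /\ y = 0.
Proof.
  intros Hsign Hsq.
  assert (Hprod : (x - y) * ((2*x+y)*(2*x+y)*(3*(x+y)-4) + 3*(x+y)*(3*y*y-4*y+2)) = 0)
    by (rewrite <- difference_factorization; lia).
  apply Z.mul_eq_0 in Hprod as [Hdiag|Hq].
  - assert (x = y) as -> by lia.
    assert ((2*y+y)*(-y-2*y) = -(9*(y*y))) as Hneg by ring.
    pose proof (Z.square_nonneg y). nia.
  - exact (cofactor_eq0 x y Hq).
Qed.

Close Scope Z_scope.

Theorem proposition8 : forall x y : Z,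
  (2 * IZR x + IZR y) / sqrt (3 * IZR y ^ 2 - 4 * IZR y + 2)
    = (- IZR x - 2 * IZR y) / sqrt (3 * IZR x ^ 2 - 4 * IZR x + 2)
  <-> (x = 0%Z /\ y = 0%Z).
Proof.
  intros x y; split.
  - intros Heq.
    destruct (div_sqrt_eq_sign_square _ _ _ _
                (quadratic_pos (IZR y)) (quadratic_pos (IZR x)) Heq) as [Hsign Hsq].
    apply integer_solution.
    + apply le_IZR. repeat rewrite ?mult_IZR, ?plus_IZR, ?minus_IZR, ?opp_IZR. lra.
    + apply eq_IZR. repeat rewrite ?mult_IZR, ?plus_IZR, ?minus_IZR, ?opp_IZR. lra.
  - intros [-> ->]. unfold Rdiv. ring.
Qed.
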